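(* Let $f:\mathbb{R}^d\to\mathbb{R}$ be convex and differentiable with $L$-Lipschitz gradient ($L>0$), let $h:\mathbb{R}^d\to\mathbb{R}\cup\{+\infty\}$ be proper, closed and convex, let $F=f+h$, and assume $F$ has bounded level sets and a minimizer $x^*$. (a) For every $x\in\mathbb{R}^d$, the value $\lambda=1/(3L)$ satisfies the linesearch condition $\mathrm{(LS)}(x,\lambda)$. (b) Let $x_0\in\mathbb{R}^d$ and define iteratively $x_{k+1}=x_k-\lambda_k G^{f}_{\lambda_k h}(x_k)$, where $\lambda_k=\max\{\lambda>0:\ \mathrm{(LS)}(x_k,\lambda)\text{ holds}\}$ (assumed to be attained). Then $\lambda_k\ge 1/(3L)$ for all $k$, and there is a constant $D$ depending only on $x_0$, $x^*$ and $L$ such that $F(x_k)-F(x^* )\le D/k$ for all $k\ge1$.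
   Context: $\mathbb{R}^d$ carries the standard inner product $\langle\cdot,\cdot\rangle$ and Euclidean norm $\|\cdot\|$. For $\lambda>0$ the proximal operator is $\mathrm{prox}_{\lambda h}(w)=\arg\min_{u\in\mathbb{R}^d}\big\{\lambda h(u)+\tfrac12\|u-w\|^2\big\}$. The gradient mapping is $G^{f}_{\lambda h}(x)=\frac{1}{\lambda}\Big(x-\mathrm{prox}_{\lambda h}\big(x-\lambda\nabla f(x)\big)\Big)$. For $x\in\mathbb{R}^d$ and $\lambda>0$, the linesearch condition $\mathrm{(LS)}(x,\lambda)$ is: with $G=G^{f}_{\lambda h}(x)$, $f(x-2\lambda G)\le f(x-\lambda G)-\lambda\langle G,\nabla f(x)\rangle+\tfrac{\lambda}{2}\|G\|^2$. *)

From HB Require Import structures.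
From mathcomp Require Import all_boot all_order all_algebra.
From mathcomp Require Import all_classical all_reals all_analysis.
Set Implicit Arguments. Unset Strict Implicit. Unset Printing Implicit Defensive.
Import Order.TTheory GRing.Theory Num.Theory.
Import numFieldNormedType.Exports.
Local Open Scope classical_set_scope.
Local Open Scope ring_scope.

Section Defs.
Variables (R : realType) (d : nat).
Notation vec := 'rV[R]_d.

Definition dotv (u v : vec) : R := \sum_(i < d) u ord0 i * v ord0 i.
Definition enorm (u : vec) : R := Num.sqrt (dotv u u).

Definition has_gradient (f : vec -> R) (gf : vec -> vec) : Prop :=
  forall x, differentiable f x /\ forall v, 'd f x v = dotv (gf x) v.

Definition convex_fun (f : vec -> R) : Prop :=
  forall (x y : vec) (t : R), 0 <= t <= 1 ->
    f (t *: x + (1 - t) *: y) <= t * f x + (1 - t) * f y.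

Definition lipschitz_grad (gf : vec -> vec) (L : R) : Prop :=
  forall x y, enorm (gf x - gf y) <= L * enorm (x - y).

Definition proper_fun (h : vec -> \bar R) : Prop :=
  (exists x, h x < +oo)%E /\ (forall x, -oo < h x)%E.

(* closed = lower semicontinuous = all sublevel sets closed *)
Definition closed_fun (h : vec -> \bar R) : Prop :=
  forall t : R, closed [set x | (h x <= t%:E)%E].

Definition convex_efun (h : vec -> \bar R) : Prop :=
  forall (x y : vec) (t : R), 0 < t < 1 ->
    (h (t *: x + (1 - t) *: y)%R <= t%:E * h x + (1 - t)%:E * h y)%E.

Definition is_prox (h : vec -> \bar R) (lam : R) (w p : vec) : Prop :=
  forall u, (lam%:E * h p + (2^-1 * enorm (p - w) ^+ 2)%:E
             <= lam%:E * h u + (2^-1 * enorm (u - w) ^+ 2)%:E)%E.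

(* prox_{lam h}(w): the (unique, under the standing assumptions) argmin *)
Definition prox (h : vec -> \bar R) (lam : R) (w : vec) : vec :=
  xget 0 [set p | is_prox h lam w p].

Definition grad_map (gf : vec -> vec) (h : vec -> \bar R) (lam : R) (x : vec)
  : vec := lam^-1 *: (x - prox h lam (x - lam *: gf x)).

Definition LS (f : vec -> R) (gf : vec -> vec) (h : vec -> \bar R)
  (x : vec) (lam : R) : Prop :=
  let G := grad_map gf h lam x in
  f (x - (2 * lam) *: G) <=
    f (x - lam *: G) - lam * dotv G (gf x) + lam / 2 * enorm G ^+ 2.

Definition Fsum (f : vec -> R) (h : vec -> \bar R) (x : vec) : \bar R :=
  ((f x)%:E + h x)%E.

Definition bounded_level_sets (F : vec -> \bar R) : Prop :=
  forall t : R, exists M : R, forall x, (F x <= t%:E)%E -> enorm x <= M.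

End Defs.

(* (a) By the descent lemma at x - lam G and the Lipschitz bound
   <grad f x - grad f (x - lam G), G> <= L lam |G|^2, the inequality of (LS)
   holds for every vector G as soon as 3 L lam <= 1; maximality of lam_k then
   gives lam_k >= 1/(3L).
   (b) Since f is convex and x_(k+1) is the midpoint of x_k and
   2 x_(k+1) - x_k, (LS) yields the sufficient decrease
   f(x_(k+1)) <= f(x_k) - <x_k - x_(k+1), grad f x_k> + |x_k - x_(k+1)|^2 / (2 lam_k).
   Together with the gradient inequality of f and the variational inequality
   of the prox step this gives the three-point estimate
   lam_k (F(x_(k+1)) - F(u)) <= <x_k - x_(k+1), x_(k+1) - u> + |x_k - x_(k+1)|^2 / 2.
   For u = x_(k+1) it shows that F(x_k) is nonincreasing; for u = xstar it
   telescopes in |x_k - xstar|^2, whence F(x_k) - F(xstar) <= 3 L |x_0 - xstar|^2 / (2k).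
   Prox points exist since h is closed and bounded below by a quadratic (from
   F >= F(xstar) and the descent lemma), so the sublevel sets of the prox
   objective are compact. *)

From HB Require Import structures.
From mathcomp Require Import all_boot all_order all_algebra.
From mathcomp Require Import all_classical all_reals all_analysis.
From mathcomp Require Import ring lra.
Import Order.TTheory GRing.Theory Num.Theory.
Import numFieldNormedType.Exports.
Local Open Scope classical_set_scope.
Local Open Scope ring_scope.

Section InnerProduct.
Context {R : realType} {d : nat}.
Implicit Types (u v w : 'rV[R]_d) (a : R).

Lemma dotvC u v : dotv u v = dotv v u.
Proof. by apply: eq_bigr => i _; rewrite mulrC. Qed.

Lemma dotvDl u w v : dotv (u + w) v = dotv u v + dotv w v.
Proof. by rewrite /dotv -big_split; apply: eq_bigr => i _; rewrite !mxE mulrDl. Qed.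

Lemma dotvZl a u v : dotv (a *: u) v = a * dotv u v.
Proof. by rewrite /dotv mulr_sumr; apply: eq_bigr => i _; rewrite !mxE mulrA. Qed.

Lemma dotvNl u v : dotv (- u) v = - dotv u v.
Proof. by rewrite -scaleN1r dotvZl mulN1r. Qed.

Lemma dotvBl u w v : dotv (u - w) v = dotv u v - dotv w v.
Proof. by rewrite dotvDl dotvNl. Qed.

Lemma dotvDr v u w : dotv v (u + w) = dotv v u + dotv v w.
Proof. by rewrite dotvC dotvDl !(dotvC v). Qed.

Lemma dotvZr a v u : dotv v (a *: u) = a * dotv v u.
Proof. by rewrite dotvC dotvZl dotvC. Qed.

Lemma dotvNr v u : dotv v (- u) = - dotv v u.
Proof. by rewrite dotvC dotvNl dotvC. Qed.

Lemma dotvBr v u w : dotv v (u - w) = dotv v u - dotv v w.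
Proof. by rewrite dotvDr dotvNr. Qed.

Lemma dotvv_ge0 u : 0 <= dotv u u.
Proof. by rewrite sumr_ge0 // => i _; rewrite -expr2 sqr_ge0. Qed.

Lemma enorm_ge0 u : 0 <= enorm u.
Proof. exact: sqrtr_ge0. Qed.

Lemma enorm_sqr u : enorm u ^+ 2 = dotv u u.
Proof. by rewrite sqr_sqrtr // dotvv_ge0. Qed.

Lemma enormZ a u : enorm (a *: u) = `|a| * enorm u.
Proof.
by rewrite /enorm dotvZl dotvZr mulrA -expr2 sqrtrM ?sqr_ge0 // sqrtr_sqr.
Qed.

Lemma enormN u : enorm (- u) = enorm u.
Proof. by rewrite -scaleN1r enormZ normrN normr1 mul1r. Qed.

Lemma enorm_sqrD u v : enorm (u + v) ^+ 2 = enorm u ^+ 2 + 2 * dotv u v + enorm v ^+ 2.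
Proof. by rewrite !enorm_sqr dotvDl !dotvDr (dotvC v u); ring. Qed.

Lemma enorm_sqrB u v : enorm (u - v) ^+ 2 = enorm u ^+ 2 - 2 * dotv u v + enorm v ^+ 2.
Proof. by rewrite enorm_sqrD enormN dotvNr; ring. Qed.

Lemma coord_le_enorm u i : `|u ord0 i| <= enorm u.
Proof.
rewrite -[enorm u]ger0_norm ?enorm_ge0 // -ler_sqr ?inE ?normr_ge0 //.
rewrite !real_normK ?num_real // enorm_sqr /dotv (bigD1 i) //= -expr2 lerDl.
by rewrite sumr_ge0 // => j _; rewrite -expr2 sqr_ge0.
Qed.

Lemma normr_le_enorm u : `|u| <= enorm u.
Proof.
rewrite [`|u|]mx_normrE; apply: bigmax_le => [|ij _]; first exact: enorm_ge0.
by rewrite (ord1 ij.1); exact: coord_le_enorm.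
Qed.

Lemma enorm_eq0 u : enorm u = 0 -> u = 0.
Proof.
move=> u0; apply/rowP => i; rewrite mxE.
by apply/eqP; rewrite -normr_le0 -u0 coord_le_enorm.
Qed.

Lemma cauchy_schwarz u v : dotv u v <= enorm u * enorm v.
Proof.
have [/enorm_eq0 ->|nu] := eqVneq (enorm u) 0.
  by rewrite /dotv big1 ?mulr_ge0 ?enorm_ge0 // => i _; rewrite mxE mul0r.
have [/enorm_eq0 ->|nv] := eqVneq (enorm v) 0.
  by rewrite /dotv big1 ?mulr_ge0 ?enorm_ge0 // => i _; rewrite mxE mulr0.
have a0 : 0 < enorm u by rewrite lt_def nu enorm_ge0.
have b0 : 0 < enorm v by rewrite lt_def nv enorm_ge0.
have := dotvv_ge0 (enorm v *: u - enorm u *: v).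
rewrite -enorm_sqr enorm_sqrB !enormZ !ger0_norm ?enorm_ge0 // dotvZl dotvZr.
set a := enorm u; set b := enorm v; set c := dotv u v => comb_ge0.
by rewrite -(ler_pM2l (mulr_gt0 a0 b0)) -/a -/b; nra.
Qed.

End InnerProduct.

Lemma quadratic_upper_bound {R : realType} (g g' : R -> R) (c : R) :
  (forall t, is_derive t (1 : R) g (g' t)) ->
  (forall t, 0 <= t <= 1 -> g' t - g' 0 <= c * t) ->
  g 1 <= g 0 + g' 0 + c / 2.
Proof.
move=> dg g'_le.
pose phi := g - g' 0 *: @id R - (c / 2) *: (@id R * @id R).
have dphi t : is_derive t (1 : R) phi (g' t - g' 0 *: 1 - (c / 2) *: (t *: 1 + t *: 1)).
  have dsq : is_derive t (1 : R) (@id R * @id R) (t *: 1 + t *: 1).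
    exact: (@is_deriveM _ _ (@id R) (@id R) t 1 1 1).
  exact: is_deriveB (is_deriveB (dg t) (is_deriveZ (g' 0) _)) (is_deriveZ _ dsq).
have phi_der t : derivable phi t 1 by have [] := dphi t.
have phi_decr : {in `[0, 1] &, {homo phi : x y /~ x <= y}}.
  apply: ler0_derive1_le_cc => [x _|x|]; first exact: phi_der.
    rewrite in_itv /= derive1E derive_val => /andP[x0 x1].
    have := g'_le x; rewrite (ltW x0) (ltW x1) => /(_ isT).
    by rewrite /GRing.scale /=; lra.
  by apply: derivable_within_continuous => x _; exact: phi_der.
have := phi_decr 1 0; rewrite !in_itv /= !lexx ler01 => /(_ isT isT isT) phi10.
have : g 1 - g' 0 * 1 - c / 2 * (1 * 1) <= g 0 - g' 0 * 0 - c / 2 * (0 * 0) by [].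
lra.
Qed.

Section SmoothConvex.
Context {R : realType} {d : nat}.
Notation vec := 'rV[R]_d.
Context {f : vec -> R} {gf : vec -> vec}.
Hypothesis f_grad : has_gradient f gf.

Lemma is_derive_line (z v : vec) (t : R) :
  is_derive t (1 : R) (fun s => f (s *: v + z)) (dotv (gf (t *: v + z)) v).
Proof.
have line_diff : is_diff t (fun s : R => s *: v + z) ( *:%R ^~ v).
  have := @is_diffD R R vec ( *:%R ^~ v) (cst z) ( *:%R ^~ v) 0 t _ _.
  by rewrite addr0; apply.
have [fdiff fdv] := f_grad (t *: v + z).
have dcomp : differentiable (f \o (fun s => s *: v + z)) t.
  exact: differentiable_comp.
apply: DeriveDef; first exact/derivable1_diffP.
rewrite -derive1E (derive1E' dcomp).
by rewrite (@diff_comp _ _ _ _ (fun s : R => s *: v + z) f t) //= diff_val scale1r.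
Qed.

Lemma descent_lemma (L : R) (z v : vec) : lipschitz_grad gf L ->
  f (z + v) <= f z + dotv (gf z) v + L / 2 * enorm v ^+ 2.
Proof.
move=> gfL.
have := @quadratic_upper_bound _ (fun s => f (s *: v + z))
  (fun s => dotv (gf (s *: v + z)) v) (L * enorm v ^+ 2) (is_derive_line z v).
rewrite /= scale1r scale0r add0r [v + z]addrC [L * _ / 2]mulrAC.
apply => t /andP[t0 t1].
rewrite -dotvBl; apply: le_trans; first exact: cauchy_schwarz.
have := gfL (t *: v + z) z; rewrite addrK enormZ ger0_norm // => gf_le.
by have := ler_wpM2r (enorm_ge0 v) gf_le; rewrite expr2; nra.
Qed.

Lemma convex_gradient_ineq (y z : vec) : convex_fun f ->
  f z + dotv (gf z) (y - z) <= f y.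
Proof.
move=> f_cvx; set w := y - z.
have Dg := is_derive_line z w 0; rewrite scale0r add0r in Dg.
suff : 'D_1 (fun s : R => f (s *: w + z)) 0 <= f y - f z.
  by rewrite derive_val; lra.
have [dg _] := Dg.
(* convexity only controls the difference quotients from the right *)
rewrite /derive (cvg_at_rightE _ _ dg).
apply: limr_le; first exact: cvgP (cvg_dnbhs_at_right dg).
near=> s.
have s0 : 0 < s by near: s; exact: nbhs_right_gt.
have s1 : s < 1 by near: s; apply: nbhs_right_lt; exact: ltr01.
have := f_cvx y z s; rewrite (ltW s0) (ltW s1) => /(_ isT).
have -> : s *: y + (1 - s) *: z = s *: w + z.
  by rewrite /w; apply/rowP => i; rewrite !mxE; ring.
rewrite /= addr0 [s%:A]mulr1 => cvx.
by rewrite ler_pdivrMl // scale0r add0r; lra.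
Unshelve. all: end_near.
Qed.

Lemma LS_ineq_small_step (L lam : R) (x G : vec) :
  lipschitz_grad gf L -> 0 <= lam -> 3 * L * lam <= 1 ->
  f (x - (2 * lam) *: G) <=
    f (x - lam *: G) - lam * dotv G (gf x) + lam / 2 * enorm G ^+ 2.
Proof.
move=> gfL lam0 lamL.
set z := x - lam *: G.
have -> : x - (2 * lam) *: G = z + (- lam) *: G.
  by rewrite /z; apply/rowP => i; rewrite !mxE; ring.
apply: le_trans (descent_lemma L z ((- lam) *: G) gfL) _.
rewrite enormZ normrN ger0_norm // dotvZr (dotvC G).
have gf_near : dotv (gf x - gf z) G <= L * (lam * enorm G) * enorm G.
  apply: le_trans (cauchy_schwarz _ _) _; apply: ler_wpM2r; first exact: enorm_ge0.
  have xz : x - z = lam *: G by rewrite /z opprB addrC subrK.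
  by have := gfL x z; rewrite xz enormZ ger0_norm.
rewrite dotvBl in gf_near.
have := ler_wpM2l lam0 gf_near.
have : 0 <= (1 - 3 * L * lam) * (lam * enorm G ^+ 2).
  by rewrite mulr_ge0 ?subr_ge0 // mulr_ge0 // sqr_ge0.
lra.
Qed.

Lemma LS_small_step (L : R) (h : vec -> \bar R) (x : vec) (lam : R) :
  lipschitz_grad gf L -> 0 <= lam -> 3 * L * lam <= 1 -> LS f gf h x lam.
Proof. exact: LS_ineq_small_step. Qed.

End SmoothConvex.

Section ExtendedAffine.
Context {R : realType}.
Implicit Types (e : \bar R) (lam q t : R).

Lemma lee_fineE {e t} : (-oo < e)%E ->
  (e <= t%:E)%E <-> (e < +oo)%E /\ fine e <= t.
Proof. by case: e => [r| |] //= _; split=> [r_le|[] //]; split => //; exact: ltry. Qed.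

Lemma lee_affine_fineE {e lam q t} : 0 < lam -> (-oo < e)%E ->
  (lam%:E * e + q%:E <= t%:E)%E <-> (e < +oo)%E /\ lam * fine e + q <= t.
Proof.
move=> lam0; case: e => [r| |] //= _.
  by rewrite -EFinM -EFinD lee_fin; split=> [r_le|[] //]; split => //; exact: ltry.
by rewrite mulry gtr0_sg // mul1e addye //; split=> [|[]].
Qed.

Lemma EFin_affine_fine {e} lam q : (-oo < e)%E -> (e < +oo)%E ->
  (lam%:E * e + q%:E = (lam * fine e + q)%:E)%E.
Proof. by case: e. Qed.

End ExtendedAffine.

Lemma ge0_of_small_perturbations {R : realFieldType} (A b : R) : 0 <= b ->
  (forall t, 0 < t < 1 -> 0 <= A + t * b) -> 0 <= A.
Proof.
move=> b0 small; rewrite leNgt; apply/negP => A0.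
(* t := -A / (2 (b - A)) makes A + t b = A (b - 2 A) / (2 (b - A)) < 0 *)
set t := - A / (2 * (b - A)).
have bA0 : 0 < 2 * (b - A) by lra.
have t0 : 0 < t by rewrite divr_gt0 //; lra.
have tbA : t * (2 * (b - A)) = - A by rewrite mulfVK // gt_eqF.
have t1 : t < 1 by nra.
by have := small t; rewrite t0 t1 => /(_ isT); nra.
Qed.

Lemma ler_quadratic_min {R : realFieldType} (k K N : R) : 0 < k ->
  - (K ^+ 2 / (4 * k)) <= k * N ^+ 2 - K * N.
Proof.
move=> k0; have : 0 <= (2 * k * N - K) ^+ 2 / (4 * k).
  by rewrite divr_ge0 ?sqr_ge0 // ltW // mulr_gt0.
have -> : (2 * k * N - K) ^+ 2 / (4 * k) = k * N ^+ 2 - K * N + K ^+ 2 / (4 * k).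
  by field; rewrite gt_eqF.
lra.
Qed.

Lemma quadratic_le_bound {R : realFieldType} (k K N T : R) :
  0 < k -> 0 <= K -> 0 <= N -> k * N ^+ 2 - K * N <= T -> N <= 1 + (`|T| + K) / k.
Proof.
move=> k0 K0 N0 quad_le.
have T_le : T <= `|T| := ler_norm T.
have T0 : 0 <= `|T| := normr_ge0 T.
have : 0 <= (`|T| + K) / k by rewrite divr_ge0 ?addr_ge0 // ltW.
have [N1|N1] := leP N 1; first lra.
suff : N <= (`|T| + K) / k by lra.
rewrite ler_pdivlMr // mulrC.
have : k * N ^+ 2 <= (`|T| + K) * N by rewrite expr2; nra.
by rewrite expr2 mulrA ler_pM2r //; lra.
Qed.

Section ProxExistence.
Context {R : realType} {d : nat}.
Notation vec := 'rV[R]_d.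
Variable h : vec -> \bar R.

Definition prox_obj (lam : R) (w u : vec) : \bar R :=
  (lam%:E * h u + (2^-1 * enorm (u - w) ^+ 2)%:E)%E.

Definition has_quad_minorant (beta : R) : Prop :=
  exists (a : R) (c : vec),
    forall u, ((a + dotv c u - beta / 2 * enorm u ^+ 2)%:E <= h u)%E.

Lemma continuous_sqr_dist (w : vec) : continuous (fun u : vec => 2^-1 * enorm (u - w) ^+ 2).
Proof.
have -> : (fun u : vec => 2^-1 * enorm (u - w) ^+ 2) =
    2^-1 \*: \sum_(i < d) (fun u : vec => (u ord0 i - w ord0 i) * (u ord0 i - w ord0 i)).
  apply/funext => u; rewrite enorm_sqr fct_sumE /dotv /=.
  by congr (_ * _); apply: eq_bigr => i _; rewrite !mxE.
move=> x; apply: continuousZl_tmp.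
elim/big_ind: _ => [|g1 g2 cg1 cg2|i _].
- exact: cst_continuous.
- exact: continuousD.
- by apply: continuousM; (apply: continuousB; [exact: coord_continuous|exact: cst_continuous]).
Qed.

Lemma closed_prox_obj_sublevel (lam : R) (w : vec) (t : R) :
  0 < lam -> closed_fun h -> (forall u, -oo < h u)%E ->
  closed [set u | (prox_obj lam w u <= t%:E)%E].
Proof.
move=> lam0 h_closed h_gtNy p p_cl.
set q := fun u : vec => 2^-1 * enorm (u - w) ^+ 2.
suff h_le e : 0 < e -> (h p <= ((t - q p + e) / lam)%:E)%E.
  rewrite /= /prox_obj; apply/(lee_affine_fineE lam0 (h_gtNy p)); split.
    by have [] := (lee_fineE (h_gtNy p)).1 (h_le 1 ltr01).
  apply/ler_addgt0Pr => e e0.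
  have [_] := (lee_fineE (h_gtNy p)).1 (h_le e e0).
  by rewrite ler_pdivlMr // -/(q p); lra.
move=> e0; apply: (h_closed ((t - q p + e) / lam)) => B pB.
(* near p, q stays above q p - e, so points of the sublevel set of lam h + q close
   to p lie in the sublevel set of h at level (t - q p + e) / lam *)
have q_near : nbhs p [set y | q p - e < q y].
  apply: (continuous_sqr_dist w p [set r | q p - e < r]).
  by apply: open_nbhs_nbhs; split; [exact: open_gt | rewrite /= gtrBl].
have [y [y_le [By q_y]]] := p_cl _ (filterI pB q_near).
exists y; split => //.
have [hy_fin hy_le] := (lee_affine_fineE lam0 (h_gtNy y)).1 y_le.
apply/(lee_fineE (h_gtNy y)); split => //.
by rewrite ler_pdivlMr //; move: q_y hy_le; rewrite /= -/(q y); lra.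
Qed.

Lemma nested_closed_bounded_meet (B : R -> set vec) :
  (forall e, 0 < e -> closed (B e)) ->
  (forall e, 0 < e -> B e !=set0) ->
  (forall e e', 0 < e -> e <= e' -> B e `<=` B e') ->
  bounded_set (B 1) ->
  exists p, forall e, 0 < e -> B e p.
Proof.
move=> B_closed B_neq0 B_mono B1_bnd.
have B_filter : ProperFilter (filter_from [set e : R | 0 < e] B).
  apply: filter_from_proper => [|e e0]; last exact: B_neq0.
  apply: filter_from_filter; first by exists 1; rewrite /= ltr01.
  move=> e e' e0 e'0; exists (Num.min e e'); first by rewrite /= lt_min e0.
  by move=> x Bx; split; apply: (B_mono (Num.min e e')) => //;
    rewrite ?lt_min ?e0 ?ge_min ?lexx ?orbT.
have B1_compact : compact (B 1) by apply: bounded_closed_compact => //; exact: B_closed.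
have [p [_ p_cluster]] := B1_compact _ B_filter (ex_intro2 _ _ 1 ltr01 (@subset_refl _ (B 1))).
exists p => e e0; apply: (B_closed e e0); move: p_cluster; rewrite clusterE.
by apply; exists e.
Qed.

Lemma prox_obj_coercive (lam beta : R) (w : vec) :
  0 < lam -> lam * beta < 1 -> has_quad_minorant beta ->
  exists c0 k K : R, [/\ 0 < k, 0 <= K & forall u, (h u < +oo)%E ->
    c0 + (k * enorm u ^+ 2 - K * enorm u) <= lam * fine (h u) + 2^-1 * enorm (u - w) ^+ 2].
Proof.
move=> lam0 lam_beta [a [c h_ge]].
exists (lam * a + 2^-1 * enorm w ^+ 2), ((1 - lam * beta) / 2), (enorm (lam *: c - w)).
split; [by rewrite divr_gt0 //; lra | exact: enorm_ge0 |] => u hu.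
have a_le : a + dotv c u - beta / 2 * enorm u ^+ 2 <= fine (h u).
  by move: (h_ge u); case: (h u) hu.
have := cauchy_schwarz (- u) (lam *: c - w).
rewrite enormN dotvNl dotvBr dotvZr (dotvC u c) => cs.
have := ler_wpM2l (ltW lam0) a_le; rewrite enorm_sqrB; nra.
Qed.

Lemma is_prox_exists (lam beta : R) (w : vec) :
  0 < lam -> lam * beta < 1 -> proper_fun h -> closed_fun h -> has_quad_minorant beta ->
  exists p, is_prox h lam w p.
Proof.
move=> lam0 lam_beta [[u0 hu0] h_gtNy] h_closed minor.
have [c0 [k [K [k0 K0 coercive]]]] := prox_obj_coercive lam beta w lam0 lam_beta minor.
set phi := fun u => lam * fine (h u) + 2^-1 * enorm (u - w) ^+ 2.
set S := [set r | exists u, (h u < +oo)%E /\ r = phi u].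
have S_inf : has_inf S.
  split; first by exists (phi u0), u0.
  exists (c0 - K ^+ 2 / (4 * k)) => _ [u [hu ->]].
  by rewrite /phi; have := coercive u hu; have := ler_quadratic_min k K (enorm u) k0; lra.
have objE e u : (prox_obj lam w u <= (inf S + e)%:E)%E <-> (h u < +oo)%E /\ phi u <= inf S + e.
  exact: lee_affine_fineE.
pose B e := [set u | (prox_obj lam w u <= (inf S + e)%:E)%E].
have [p Bp] : exists p, forall e, 0 < e -> B e p.
  apply: nested_closed_bounded_meet => [e _|e e0|e e' _ ee' u|].
  - exact: closed_prox_obj_sublevel.
  - have [_ [u [hu ->]] phi_lt] := inf_adherent e0 S_inf.
    by exists u; apply/objE; split => //; exact: ltW.
  - by move=> /objE[hu phi_le]; apply/objE; split => //; lra.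
  - exists (1 + (`|inf S + 1 - c0| + K) / k); split; first exact: num_real.
    move=> M M_gt u /objE[hu phi_le]; apply: le_trans (normr_le_enorm u) _.
    apply/ltW/le_lt_trans/M_gt/quadratic_le_bound => //; first exact: enorm_ge0.
    by move: phi_le; rewrite /phi; have := coercive u hu; lra.
have [hp _] := (objE 1 p).1 (Bp 1 ltr01).
have phi_p : phi p <= inf S.
  by apply/ler_addgt0Pr => e e0; have [] := (objE e p).1 (Bp e e0).
exists p => u; rewrite /prox_obj (EFin_affine_fine _ _ (h_gtNy p) hp).
have [hu|] := ltP (h u) +oo%E.
  rewrite (EFin_affine_fine _ _ (h_gtNy u) hu) lee_fin.
  by apply: le_trans phi_p (ge_inf _ _) => //; [case: S_inf | exists u].
rewrite leye_eq => /eqP ->.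
by rewrite mulry gtr0_sg // mul1e addye // leey.
Qed.

Lemma is_prox_variational {lam : R} {w p : vec} :
  0 < lam -> proper_fun h -> convex_efun h -> is_prox h lam w p ->
  (h p < +oo)%E /\ forall u, (h u < +oo)%E ->
    lam * fine (h p) + dotv (w - p) (u - p) <= lam * fine (h u).
Proof.
move=> lam0 [[u0 hu0] h_gtNy] h_cvx p_min.
have hp : (h p < +oo)%E.
  have := p_min u0; rewrite (EFin_affine_fine _ _ (h_gtNy u0) hu0).
  by move=> /(lee_affine_fineE lam0 (h_gtNy p))[].
split => // u hu; rewrite -subr_ge0.
(* compare p with the points p + t (u - p) of the segment towards u *)
apply: (@ge0_of_small_perturbations _ _ (2^-1 * enorm (u - p) ^+ 2)).
  by rewrite mulr_ge0 ?sqr_ge0 // invr_ge0.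
move=> t /andP[t0 t1]; set ut := t *: u + (1 - t) *: p.
have := h_cvx u p t; rewrite t0 t1 => /(_ isT).
rewrite -(fineK (_ : h u \is a fin_num)) ?fin_numElt ?h_gtNy //.
rewrite -(fineK (_ : h p \is a fin_num)) ?fin_numElt ?h_gtNy //.
rewrite -!EFinM -EFinD => /(lee_fineE (h_gtNy ut))[hut hut_le].
have := p_min ut.
rewrite /= (EFin_affine_fine _ _ (h_gtNy p) hp) (EFin_affine_fine _ _ (h_gtNy ut) hut) lee_fin.
have -> : ut - w = (p - w) + t *: (u - p).
  by rewrite /ut; apply/rowP => i; rewrite !mxE; ring.
rewrite [enorm (_ + t *: _) ^+ 2]enorm_sqrD dotvZr -[p - w]opprB dotvNl => obj_le.
have := ler_wpM2l (ltW lam0) hut_le => lam_le.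
suff : 0 <= t * (lam * fine (h u) - (lam * fine (h p) + dotv (w - p) (u - p))
                 + t * (2^-1 * enorm (u - p) ^+ 2)) by rewrite pmulr_rge0.
rewrite enormZ exprMn ger0_norm ?(ltW t0) // in obj_le; nra.
Qed.

Lemma is_prox_affine_minorant {lam : R} {w p : vec} :
  0 < lam -> proper_fun h -> convex_efun h -> is_prox h lam w p ->
  has_quad_minorant 0.
Proof.
move=> lam0 h_proper h_cvx p_min.
have [hp p_var] := is_prox_variational lam0 h_proper h_cvx p_min.
exists (fine (h p) - lam^-1 * dotv (w - p) p), (lam^-1 *: (w - p)) => u.
have [hu|] := ltP (h u) +oo%E; last by rewrite leye_eq => /eqP ->; rewrite leey.
rewrite -(fineK (_ : h u \is a fin_num)) ?fin_numElt ?(h_proper.2 u) //.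
rewrite lee_fin mul0r mul0r subr0 dotvZl.
have lamV0 : 0 <= lam^-1 by rewrite invr_ge0 ltW.
have := ler_wpM2l lamV0 (p_var u hu).
by rewrite dotvBr mulrDr !mulrA mulVf ?gt_eqF // !mul1r; lra.
Qed.

Lemma is_prox_prox (beta lam : R) (w : vec) :
  proper_fun h -> closed_fun h -> convex_efun h -> has_quad_minorant beta ->
  0 < lam -> is_prox h lam w (prox h lam w).
Proof.
move=> h_proper h_closed h_cvx minor lam0.
(* a step small enough for the given minorant yields some prox point, hence an affine minorant *)
set lam1 := (`|beta| + 1)^-1.
have lam1_gt0 : 0 < lam1 by rewrite invr_gt0 ltr_wpDl.
have lam1_beta : lam1 * beta < 1.
  rewrite -ltr_pdivlMl // invrK; apply: le_lt_trans (ler_norm _) _; lra.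
have [p1 p1_min] := is_prox_exists lam1 beta 0 lam1_gt0 lam1_beta h_proper h_closed minor.
have affine := is_prox_affine_minorant lam1_gt0 h_proper h_cvx p1_min.
have lam_0 : lam * 0 < 1 by rewrite mulr0 ltr01.
have [p p_min] := is_prox_exists lam 0 w lam0 lam_0 h_proper h_closed affine.
by apply: xgetPex; exists p.
Qed.

End ProxExistence.

Lemma sublinear_rate {R : realDomainType} {e a lam : nat -> R} {c : R} :
  0 <= c -> (forall k, c <= lam k) -> (forall k, 0 <= e k) ->
  (forall k, e k.+1 <= e k) -> (forall k, lam k * e k <= a k - a k.+1) ->
  forall n, c * n.+1%:R * e n <= a 0%N - a n.+1.
Proof.
move=> c0 c_le e_ge0 e_decr step; elim=> [|n IHn].
  by rewrite mulr1; apply: le_trans (step 0%N); rewrite ler_wpM2r.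
have cn0 : 0 <= c * n.+1%:R by rewrite mulr_ge0.
have := ler_wpM2l cn0 (e_decr n); have := ler_wpM2r (e_ge0 n.+1) (c_le n.+1).
by have := step n.+1; rewrite -[n.+2%:R]natr1 mulrDr mulr1 mulrDl; lra.
Qed.

Lemma convex_fun_reflect {R : realType} {d : nat} {f : 'rV[R]_d -> R} {x p : 'rV[R]_d} {r : R} :
  convex_fun f -> f (p + (p - x)) <= f p + r -> f p <= f x + r.
Proof.
move=> f_cvx reflect_le.
have := f_cvx x (p + (p - x)) 2^-1; rewrite invr_ge0 ler0n invf_le1 ?ler1n // => /(_ isT).
have -> : 2^-1 *: x + (1 - 2^-1) *: (p + (p - x)) = p.
  by apply/rowP => i; rewrite !mxE; field.
lra.
Qed.

Lemma prox_grad_step {R : realType} {d : nat} (gf : 'rV[R]_d -> 'rV[R]_d)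
    (h : 'rV[R]_d -> \bar R) (lam : R) (x : 'rV[R]_d) :
  lam != 0 -> x - lam *: grad_map gf h lam x = prox h lam (x - lam *: gf x).
Proof. by move=> lam0; rewrite /grad_map scalerA mulfV // scale1r opprB addrC subrK. Qed.

Lemma Fsum_fin {R : realType} {d : nat} (f : 'rV[R]_d -> R) (h : 'rV[R]_d -> \bar R) {y} :
  (-oo < h y)%E -> (h y < +oo)%E -> Fsum f h y = (f y + fine (h y))%:E.
Proof. by rewrite /Fsum; case: (h y). Qed.

Section ProximalGradient.
Context {R : realType} {d : nat}.
Notation vec := 'rV[R]_d.
Context {f : vec -> R} {gf : vec -> vec} {h : vec -> \bar R} {L : R} {xstar : vec}.
Hypotheses (f_cvx : convex_fun f) (f_grad : has_gradient f gf) (gf_lip : lipschitz_grad gf L).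
Hypotheses (h_proper : proper_fun h) (h_closed : closed_fun h) (h_cvx : convex_efun h).
Hypothesis xstar_min : forall x, (Fsum f h xstar <= Fsum f h x)%E.

Let F u := f u + fine (h u).

Lemma minimizer_dom : (h xstar < +oo)%E.
Proof.
have [[u hu] h_gtNy] := h_proper; have := xstar_min u; rewrite /Fsum.
case: (h xstar) (h_gtNy xstar) => [r| |] //= _.
by rewrite addey // leye_eq; case: (h u) hu (h_gtNy u).
Qed.

Lemma minimizer_quad_minorant : has_quad_minorant h L.
Proof.
exists (F xstar - f 0), (- gf 0) => u.
have := xstar_min u; have := descent_lemma f_grad L 0 u gf_lip.
rewrite (Fsum_fin f h (h_proper.2 xstar) minimizer_dom) /Fsum add0r dotvNl.
case: (h u) (h_proper.2 u) => [r| |] //= _; last by move=> _ _; rewrite leey.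
by rewrite -EFinD !lee_fin /F; lra.
Qed.

Lemma prox_grad_three_point (x : vec) (lam : R) : 0 < lam -> LS f gf h x lam ->
  let p := x - lam *: grad_map gf h lam x in
  (h p < +oo)%E /\ forall u, (h u < +oo)%E ->
    lam * (F p - F u) <= dotv (x - p) (p - u) + 2^-1 * enorm (x - p) ^+ 2.
Proof.
move=> lam0 x_LS p.
have lam_neq0 : lam != 0 by rewrite gt_eqF.
have p_min : is_prox h lam (x - lam *: gf x) p.
  rewrite /p prox_grad_step //.
  exact: (is_prox_prox _ L _ _ h_proper h_closed h_cvx minimizer_quad_minorant lam0).
have [hp p_var] := is_prox_variational h lam0 h_proper h_cvx p_min.
split => // u hu.
(* sufficient decrease of f along the step, from (LS) and convexity *)
have f_decr : lam * f p <= lam * f x - lam * dotv (x - p) (gf x) + 2^-1 * enorm (x - p) ^+ 2.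
  have xp : x - p = lam *: grad_map gf h lam x by rewrite /p opprB addrC subrK.
  have refl : p + (p - x) = x - (2 * lam) *: grad_map gf h lam x.
    by rewrite /p; apply/rowP => i; rewrite !mxE; ring.
  have : f p <= f x + (lam / 2 * enorm (grad_map gf h lam x) ^+ 2
                      - lam * dotv (grad_map gf h lam x) (gf x)).
    by apply: (convex_fun_reflect f_cvx); move: x_LS; rewrite /LS -refl -/p; lra.
  rewrite xp dotvZl enormZ gtr0_norm // exprMn => fp_le.
  by have := ler_wpM2l (ltW lam0) fp_le; rewrite expr2; nra.
have f_lin := ler_wpM2l (ltW lam0) (convex_gradient_ineq f_grad u x f_cvx).
have dot1 : dotv (x - lam *: gf x - p) (u - p) =
    dotv (x - p) (u - p) - lam * dotv (gf x) (u - x) - lam * dotv (gf x) (x - p).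
  have -> : x - lam *: gf x - p = (x - p) - lam *: gf x.
    by apply/rowP => i; rewrite !mxE; ring.
  have -> : u - p = (u - x) + (x - p) by apply/rowP => i; rewrite !mxE; ring.
  by rewrite [dotv (_ - lam *: _) _]dotvBl dotvZl !dotvDr; ring.
have dot2 : dotv (x - p) (p - u) = - dotv (x - p) (u - p).
  by rewrite -[p - u]opprB dotvNr.
have := p_var u hu; rewrite dot1 dot2 (dotvC (x - p)) in f_decr *; rewrite /F; lra.
Qed.

Section Iterates.
Context {x : nat -> vec} {lam : nat -> R}.
Hypotheses (lam_gt0 : forall k, 0 < lam k) (x_LS : forall k, LS f gf h (x k) (lam k)).
Hypothesis x_step : forall k, x k.+1 = x k - lam k *: grad_map gf h (lam k) (x k).

Lemma iterate_three_point k : (h (x k.+1) < +oo)%E /\ forall u, (h u < +oo)%E ->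
  lam k * (F (x k.+1) - F u) <=
    dotv (x k - x k.+1) (x k.+1 - u) + 2^-1 * enorm (x k - x k.+1) ^+ 2.
Proof. by rewrite x_step; exact: prox_grad_three_point. Qed.

Lemma iterate_decr k : F (x k.+2) <= F (x k.+1).
Proof.
have [hx _] := iterate_three_point k; have [_ step] := iterate_three_point k.+1.
have := step _ hx; rewrite -[x k.+2 - x k.+1]opprB dotvNr -enorm_sqr => step_le.
have : lam k.+1 * (F (x k.+2) - F (x k.+1)) <= 0.
  by apply: le_trans step_le _; have := sqr_ge0 (enorm (x k.+1 - x k.+2)); lra.
by rewrite pmulr_rle0 // subr_le0.
Qed.

Lemma iterate_gap_ge0 k : 0 <= F (x k.+1) - F xstar.
Proof.
have [hx _] := iterate_three_point k; have := xstar_min (x k.+1).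
rewrite (Fsum_fin f h (h_proper.2 _) minimizer_dom) (Fsum_fin f h (h_proper.2 _) hx).
by rewrite lee_fin subr_ge0.
Qed.

Lemma iterate_dist k : lam k * (F (x k.+1) - F xstar) <=
  2^-1 * enorm (x k - xstar) ^+ 2 - 2^-1 * enorm (x k.+1 - xstar) ^+ 2.
Proof.
have [_ step] := iterate_three_point k; apply: le_trans (step _ minimizer_dom) _.
have -> : x k - x k.+1 = (x k - xstar) - (x k.+1 - xstar).
  by apply/rowP => i; rewrite !mxE; ring.
rewrite enorm_sqrB dotvBl -enorm_sqr; lra.
Qed.

Lemma prox_grad_rate {c : R} : 0 < c -> (forall k, c <= lam k) ->
  forall k, (1 <= k)%N ->
  (Fsum f h (x k) - Fsum f h xstar <= (enorm (x 0%N - xstar) ^+ 2 / (2 * c * k%:R))%:E)%E.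
Proof.
move=> c0 c_le [//|n] _.
have gap_decr k : F (x k.+2) - F xstar <= F (x k.+1) - F xstar.
  by rewrite lerD2r iterate_decr.
have := sublinear_rate (ltW c0) c_le iterate_gap_ge0 gap_decr iterate_dist n.
have [hx _] := iterate_three_point n.
rewrite (Fsum_fin f h (h_proper.2 _) minimizer_dom) (Fsum_fin f h (h_proper.2 _) hx).
rewrite -EFinB lee_fin ler_pdivlMr ?mulr_gt0 // => rate.
by have := sqr_ge0 (enorm (x n.+1 - xstar)); rewrite /F in rate *; nra.
Qed.

End Iterates.

End ProximalGradient.

Theorem theorem2p2 (R : realType) (d : nat) (L : R) (x0 xstar : 'rV[R]_d) :
  exists D : R,
  forall (f : 'rV[R]_d -> R) (gf : 'rV[R]_d -> 'rV[R]_d)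
         (h : 'rV[R]_d -> \bar R),
    0 < L ->
    convex_fun f -> has_gradient f gf -> lipschitz_grad gf L ->
    proper_fun h -> closed_fun h -> convex_efun h ->
    bounded_level_sets (Fsum f h) ->
    (forall x, (Fsum f h xstar <= Fsum f h x)%E) ->
    (* (a) *)
    (forall x, LS f gf h x (3 * L)^-1) /\
    (* (b) *)
    (forall (x : nat -> 'rV[R]_d) (lam : nat -> R),
       x 0%N = x0 ->
       (forall k, 0 < lam k /\ LS f gf h (x k) (lam k) /\
                  forall mu, 0 < mu -> LS f gf h (x k) mu -> mu <= lam k) ->
       (forall k, x k.+1 = x k - lam k *: grad_map gf h (lam k) (x k)) ->
       (forall k, (3 * L)^-1 <= lam k) /\
       (forall k, (1 <= k)%N ->
          (Fsum f h (x k) - Fsum f h xstar <= (D / k%:R)%:E)%E)).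
Proof.
exists (3 * L / 2 * enorm (x0 - xstar) ^+ 2).
move=> f gf h L0 f_cvx f_grad gf_lip h_proper h_closed h_cvx _ xstar_min.
have L3_gt0 : 0 < (3 * L)^-1 by rewrite invr_gt0 mulr_gt0.
have LS_L3 x : LS f gf h x (3 * L)^-1.
  by apply: (LS_small_step f_grad L h x _ gf_lip); [exact: ltW | rewrite mulfV // gt_eqF ?mulr_gt0].
split=> // x lam x_0 lam_max x_step.
have lam_ge k : (3 * L)^-1 <= lam k by case: (lam_max k) => _ [_]; apply.
split=> // k k_ge1.
have := prox_grad_rate f_cvx f_grad gf_lip h_proper h_closed h_cvx xstar_min
  (fun k => (lam_max k).1) (fun k => (lam_max k).2.1) x_step L3_gt0 lam_ge _ k_ge1.
have k_neq0 : k%:R != 0 :> R by rewrite pnatr_eq0 -lt0n.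
move=> /le_trans; apply; rewrite x_0 lee_fin le_eqVlt; apply/orP; left; apply/eqP.
by field; rewrite k_neq0 gt_eqF.
Qed.
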